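(* Consider the corrupted Lipschitz contextual search problem with pricing loss described in the context, and assume the corruption budget $C\ge 1$ is known to the learner. If the learner runs Algorithm 3 (described in the context) with $\eta_0=T^{-1/(d+1)}$ and $\tau_0=\sqrt{T/C}$, then for every $L$-Lipschitz $f$, context sequence and adaptive corruption strategy with at most $C$ corrupted rounds, the total pricing loss is at most \[ L\cdot\widetilde{O}\big(T^{d/(d+1)}+\sqrt{TC}\big), \] where $\widetilde O$ hides logarithmic factors in $T$.
   Context: Problem. Fix $L>0$, $d\ge 1$, horizon $T\ge 2$. An adversary fixes an unknown $f:[0,1]^d\to[0,L]$ with $|f(x)-f(y)|\le L\|x-y\|_\infty$. In each round $t=1,\dots,T$: the adversary chooses $x_t\in[0,1]^d$; the learner observes $x_t$ and posts a guess $q_t$; the adversary observes $q_t$ and sends $\sigma_t\in\{0,1\}$. With $\sigma(u)=1$ if $u>0$, $0$ if $u\le 0$: in uncorrupted rounds $\sigma_t=\sigma(q_t-f(x_t))$, in corrupted rounds $\sigma_t=1-\sigma(q_t-f(x_t))$; the adversary chooses adaptively (after seeing $q_t$) which rounds to corrupt, with at most $C$ corrupted rounds. The pricing loss of round $t$ is $f(x_t)-q_t\cdot\mathbb{1}[q_t\le f(x_t)]$. $\mathtt{len}$ denotes length of an interval and side length of a hypercube. Subroutine $\mathtt{MidpointQuery}(I,Y)$, $Y=[a,b]$: guess $q=(a+b)/2$; if $\sigma_t=1$ return $Y\cap[0,q+L\,\mathtt{len}(I)]$, if $\sigma_t=0$ return $Y\cap[q-L\,\mathtt{len}(I),\infty)$.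 Algorithm 3 (parameters $\eta_0$, $\tau_0$). Uniformly partition $[0,1]^d$ into hypercubes of side length $\Theta(\eta_0)$; each hypercube $I_j$ has range $Y_j$ (initially $[0,L]$) and counter $c_j$ (initially $0$). In round $t$, with $I_j\ni x_t$: if $\mathtt{len}(Y_j)<10L\eta_0$, set $c_j:=c_j+1$; if $c_j>\tau_0$ guess $\max(Y_j)$ (checking round) and set $c_j:=0$, else guess $\min(Y_j)$ (pricing round); if a checking round receives $\sigma_t=0$ or a pricing round receives $\sigma_t=1$ (the learner is ''surprised''), set $Y_j:=[0,L]$, $c_j:=0$. Otherwise (searching round) set $Y_j:=\mathtt{MidpointQuery}(I_j,Y_j)$. *)

From Stdlib Require Import Reals Lra Lia List ZArith.
Open Scope R_scope.

(** Points of [0,1]^d are functions nat -> R; only coordinates i < d matter. *)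
Definition point := nat -> R.

Definition in_unit_cube (d : nat) (x : point) : Prop :=
  forall i, (i < d)%nat -> 0 <= x i <= 1.

Definition dist_inf (d : nat) (x y : point) : R :=
  fold_right Rmax 0 (map (fun i => Rabs (x i - y i)) (seq 0 d)).

Definition admissible_f (d : nat) (L : R) (f : point -> R) : Prop :=
  (forall x, in_unit_cube d x -> 0 <= f x <= L) /\
  (forall x y, in_unit_cube d x -> in_unit_cube d y ->
     Rabs (f x - f y) <= L * dist_inf d x y).

Definition sgn (u : R) : bool := if Rlt_dec 0 u then true else false.

Definition pricing_loss (v q : R) : R := v - (if Rle_dec q v then q else 0).

Definition cell (N : nat) (r : R) : nat :=
  Nat.min (N - 1) (Z.to_nat (Int_part (r * INR N))).

Definition cube_index (d N : nat) (x : point) : list nat :=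
  map (fun i => cell N (x i)) (seq 0 d).

(** Per-hypercube state: range Y_j = [lo, hi] and counter c_j. *)
Record cstate := mkC { lo : R; hi : R; cnt : nat }.

(** One round of Algorithm 3 on the hypercube containing x_t, with range
    width parameter L, eta0, tau0 and cube side length w. *)
Definition alg3_round (L eta0 tau0 w : R) (s : cstate) : R * (bool -> cstate) :=
  let a := lo s in
  let b := hi s in
  if Rlt_dec (b - a) (10 * L * eta0) then
    let c := S (cnt s) in
    if Rlt_dec tau0 (INR c) then
      (* checking round: guess max Y; surprised iff sigma = 0 *)
      (b, fun sg : bool => if sg then mkC a b 0 else mkC 0 L 0)
    else
      (* pricing round: guess min Y; surprised iff sigma = 1 *)
      (a, fun sg : bool => if sg then mkC 0 L 0 else mkC a b c)
  else
    (* searching round: MidpointQuery(I_j, Y_j) *)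
    let q := (a + b) / 2 in
    (q, fun sg : bool => if sg
                   then mkC (Rmax a 0) (Rmin b (q + L * w)) (cnt s)
                   else mkC (Rmax a (q - L * w)) b (cnt s)).

Definition history := list (point * R * bool).

Record gstate := mkG {
  gcubes : list nat -> cstate;
  ghist : history;
  gncorr : nat;
  gloss : R
}.

(** The game: the adversary (adaptive) picks x_t from the history, then,
    after seeing q_t, decides whether to corrupt round t. *)
Fixpoint run_game (d N : nat) (L eta0 tau0 : R) (f : point -> R)
    (advx : history -> point) (advc : history -> point -> R -> bool)
    (n : nat) : gstate :=
  match n with
  | O => mkG (fun _ => mkC 0 L 0) nil 0 0
  | S m =>
      let g := run_game d N L eta0 tau0 f advx advc m in
      let x := advx (ghist g) in
      let j := cube_index d N x in
      let r := alg3_round L eta0 tau0 (/ INR N) (gcubes g j) in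
      let q := fst r in
      let cor := advc (ghist g) x q in
      let sg := xorb (sgn (q - f x)) cor in
      mkG (fun j' => if list_eq_dec Nat.eq_dec j' j then snd r sg else gcubes g j')
          (ghist g ++ (x, q, sg) :: nil)
          (gncorr g + (if cor then 1 else 0))
          (gloss g + pricing_loss (f x) q)
  end.

Definition eta0_of (d T : nat) : R := Rpower (INR T) (- / INR (d + 1)).
Definition tau0_of (T C : nat) : R := sqrt (INR T / INR C).
(** Number of cells per side: side length 1/N = Theta(eta0). *)
Definition N_of (eta0 : R) : nat := Z.to_nat (up (/ eta0)).

(* Amortised analysis with one potential per hypercube [I_j], whose state is a range
   [Y_j = [a, b]] and a counter [c].  While [Y_j] is wide, the potential is [L] times the
   number of midpoint halvings still needed to make it narrow, plus [L (tau0 + M + 1)] if [f]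
   leaves [Y_j] somewhere on [I_j].  While [Y_j] is narrow, it is [L (tau0 - c)] if [f] exceeds [Y_j]
   by more than its oscillation [L / N] on [I_j] (each pricing round then loses at most [L],
   and a checking round comes within [tau0] rounds), plus [(M + 1) L] if [f] leaves [Y_j],
   which pays for the reset this eventually causes.  A counter term [(M + 1) L c / tau0] pays
   for the reset after a surprising checking round.  Here [M = log2 T] bounds the number of
   halvings from the initial range [[0, L]].  Each round then satisfies
   loss + increase of potential <= 10 L eta0 + L / N + (M + 1) L / tau0,
   plus [L (tau0 + M + 1)] in a corrupted round.  Summing over the [T] rounds, with [N^d] cubes
   of initial potential at most [M L] and [N ~ T^(1/(d+1))], the loss is
   O(L log T (T^(d/(d+1)) + T / tau0 + C tau0)) = O(L log T (T^(d/(d+1)) + sqrt (T C))). *)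

From Stdlib Require Import Reals Lra Lia List ZArith Bool Classical ClassicalDescription.
From Coquelicot Require Import Rcomplements.
Open Scope R_scope.

Lemma ln_le_of_le x y : x <= y -> 1 <= y -> ln x <= ln y.
Proof.
  intros Hxy Hy. destruct (Rlt_dec 0 x) as [Hx|Hx]; [now apply ln_le|].
  (* Stdlib's [ln] is [0] on nonpositive arguments. *)
  replace (ln x) with 0 by (unfold ln; destruct (Rlt_dec 0 x); [contradiction|reflexivity]).
  rewrite <- ln_1. apply ln_le; lra.
Qed.

Lemma ln_2_pos : 0 < ln 2.
Proof. pose proof ln_lt_2; lra. Qed.

Definition lg (x : R) : R := ln x / ln 2.

Lemma lg_ge_1 r : 2 <= r -> 1 <= lg r.
Proof.
  intros Hr. pose proof ln_2_pos. unfold lg.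
  apply Rle_div_r; [lra|]. rewrite Rmult_1_l. apply ln_le; lra.
Qed.

Lemma Rmax_lg_halve r r' : 2 <= r -> r' <= r / 2 -> Rmax 0 (lg r') + 1 <= Rmax 0 (lg r).
Proof.
  intros Hr Hr'. pose proof ln_2_pos. pose proof (lg_ge_1 r Hr).
  rewrite (Rmax_right 0 (lg r)) by lra.
  assert (Hhalf : lg r' <= lg r - 1).
  { unfold lg. apply Rle_div_l; [lra|].
    replace ((ln r / ln 2 - 1) * ln 2) with (ln r - ln 2) by (field; lra).
    rewrite <- ln_div by lra. apply ln_le_of_le; lra. }
  assert (Rmax 0 (lg r') <= lg r - 1) by (apply Rmax_lub; lra). lra.
Qed.

Lemma cell_lt N r : (1 <= N)%nat -> (cell N r < N)%nat.
Proof. intros. unfold cell. lia. Qed.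

Lemma cell_spec N r : (1 <= N)%nat -> 0 <= r <= 1 ->
  INR (cell N r) <= r * INR N <= INR (cell N r) + 1.
Proof.
  intros HN Hr. unfold cell.
  destruct (base_Int_part (r * INR N)) as [Hz1 Hz2].
  set (z := Int_part (r * INR N)) in *.
  assert (HN1 : 1 <= INR N) by (apply (le_INR 1); auto).
  assert (Hz : (-1 < z)%Z) by (apply lt_IZR; nra).
  assert (Hzn : INR (Z.to_nat z) = IZR z) by (rewrite INR_IZR_INZ, Z2Nat.id by lia; reflexivity).
  destruct (Nat.le_gt_cases (Z.to_nat z) (N - 1)) as [Hle|Hgt].
  - rewrite Nat.min_r, Hzn by auto. lra.
  - rewrite Nat.min_l, minus_INR by lia. apply lt_INR in Hgt. rewrite minus_INR in Hgt by lia.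
    rewrite Hzn in Hgt. simpl INR in *. nra.
Qed.

Lemma same_cell_close N r r' : (1 <= N)%nat -> 0 <= r <= 1 -> 0 <= r' <= 1 ->
  cell N r = cell N r' -> Rabs (r - r') <= / INR N.
Proof.
  intros HN Hr Hr' Heq.
  pose proof (cell_spec N r HN Hr). pose proof (cell_spec N r' HN Hr').
  assert (HN1 : 1 <= INR N) by (apply (le_INR 1); auto).
  rewrite <- Rdiv_1_l. apply Rle_div_r; [lra|].
  rewrite <- (Rabs_pos_eq (INR N)), <- Rabs_mult by lra.
  apply Rabs_le. rewrite Heq in *. lra.
Qed.

Lemma fold_right_Rmax_le (h : nat -> R) l w : 0 <= w -> (forall i, In i l -> h i <= w) ->
  fold_right Rmax 0 (map h l) <= w.
Proof.
  intros Hw H. induction l as [|i l IH]; cbn; [lra|].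
  apply Rmax_lub; [apply H; left; auto|apply IH; intros; apply H; right; auto].
Qed.

Definition in_cube (d N : nat) (j : list nat) (y : point) : Prop :=
  in_unit_cube d y /\ cube_index d N y = j.

Lemma dist_inf_in_cube d N j x y : (1 <= N)%nat ->
  in_cube d N j x -> in_cube d N j y -> dist_inf d x y <= / INR N.
Proof.
  intros HN [Hx <-] [Hy Hxy]. unfold dist_inf.
  apply fold_right_Rmax_le.
  { left; apply Rinv_0_lt_compat, lt_0_INR; lia. }
  intros i Hi. pose proof Hi as Hi'. apply in_seq in Hi'.
  apply same_cell_close; [auto|apply Hx; lia|apply Hy; lia|].
  unfold cube_index in Hxy. symmetry.
  exact (proj1 map_ext_in_iff Hxy i Hi).
Qed.

Lemma in_cube_oscillation d N L f j x y : (1 <= N)%nat -> admissible_f d L f ->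
  in_cube d N j x -> in_cube d N j y -> f y <= f x + L * / INR N.
Proof.
  intros HN [Hrange Hlip] Hx Hy.
  assert (HL : 0 <= L) by (pose proof (Hrange x (proj1 Hx)); lra).
  pose proof (Hlip y x (proj1 Hy) (proj1 Hx)) as Hfyx. apply Rabs_le_between' in Hfyx.
  pose proof (Rmult_le_compat_l L _ _ HL (dist_inf_in_cube d N j y x HN Hy Hx)). lra.
Qed.

Fixpoint cube_indices (d N : nat) : list (list nat) :=
  match d with
  | O => nil :: nil
  | S d' => flat_map (fun i => map (cons i) (cube_indices d' N)) (seq 0 N)
  end.

Lemma in_cube_indices d N (g : nat -> nat) k :
  (forall i, (g i < N)%nat) -> In (map g (seq k d)) (cube_indices d N).
Proof.
  revert k. induction d as [|d IH]; intros k Hg; cbn; [auto|].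
  apply in_flat_map. exists (g k). split.
  - apply in_seq. specialize (Hg k). lia.
  - apply in_map, IH, Hg.
Qed.

Lemma cube_indices_NoDup d N : NoDup (cube_indices d N).
Proof.
  induction d as [|d IH]; cbn; [repeat constructor; auto|].
  generalize (seq_NoDup N 0). generalize (seq 0 N) as l.
  induction l as [|i l IHl]; intros Hl; cbn; [constructor|].
  apply NoDup_cons_iff in Hl as [Hi Hl].
  apply NoDup_app; [|now apply IHl|].
  - apply NoDup_map_NoDup_ForallPairs; [|exact IH].
    intros u v _ _ Huv. now injection Huv.
  - intros v Hv Hv'.
    apply in_map_iff in Hv as [u [<- _]].
    apply in_flat_map in Hv' as [i' [Hi' Hu]]. apply in_map_iff in Hu as [u' [Hu _]].
    injection Hu as -> _. contradiction.
Qed.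

Lemma length_cube_indices d N : length (cube_indices d N) = (N ^ d)%nat.
Proof.
  induction d as [|d IH]; cbn; [auto|].
  replace (N * N ^ d)%nat with (length (seq 0 N) * length (cube_indices d N))%nat
    by now rewrite length_seq, IH.
  induction (seq 0 N) as [|i l IHl]; [auto|]. cbn [flat_map length].
  rewrite length_app, length_map, IHl. lia.
Qed.

Definition sumR (l : list R) : R := fold_right Rplus 0 l.

Lemma sumR_map_nonneg {A} (F : A -> R) l : (forall a, 0 <= F a) -> 0 <= sumR (map F l).
Proof. intros H. unfold sumR. induction l as [|a l IH]; cbn; [lra|]. specialize (H a). lra. Qed.

Lemma sumR_map_le_const {A} (F : A -> R) l c : (forall a, F a <= c) ->
  sumR (map F l) <= INR (length l) * c.
Proof.
  intros H. unfold sumR. induction l as [|a l IH]; cbn -[INR]; [simpl; lra|].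
  rewrite S_INR. specialize (H a). lra.
Qed.

Lemma sumR_map_update {A} (F G : A -> R) j l : NoDup l -> In j l ->
  (forall i, i <> j -> G i = F i) -> sumR (map G l) = sumR (map F l) - F j + G j.
Proof.
  intros Hl Hj HGF. unfold sumR. induction l as [|i l IH]; [destruct Hj|].
  apply NoDup_cons_iff in Hl as [Hi Hl]. cbn.
  destruct (classic (i = j)) as [<-|Hij].
  - rewrite (map_ext_in G F); [lra|].
    intros k Hk. apply HGF. intros ->. contradiction.
  - destruct Hj as [->|Hj]; [contradiction|]. rewrite HGF, IH by auto. lra.
Qed.

Definition indicator (P : Prop) : R := if excluded_middle_informative P then 1 else 0.

Lemma indicator_true (P : Prop) : P -> indicator P = 1.
Proof. intros. unfold indicator. destruct (excluded_middle_informative P); tauto. Qed.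

Lemma indicator_false (P : Prop) : ~ P -> indicator P = 0.
Proof. intros. unfold indicator. destruct (excluded_middle_informative P); tauto. Qed.

Lemma indicator_bounds (P : Prop) : 0 <= indicator P <= 1.
Proof. unfold indicator. destruct (excluded_middle_informative P); lra. Qed.

Lemma indicator_mono (P Q : Prop) : (P -> Q) -> indicator P <= indicator Q.
Proof.
  intros H. unfold indicator.
  destruct (excluded_middle_informative P), (excluded_middle_informative Q); tauto || lra.
Qed.

Lemma pricing_loss_le v q : 0 <= q -> pricing_loss v q <= v.
Proof. intros. unfold pricing_loss. destruct (Rle_dec q v); lra. Qed.

Lemma pricing_loss_of_le v q : q <= v -> pricing_loss v q = v - q.
Proof. intros. unfold pricing_loss. destruct (Rle_dec q v); lra. Qed.

Lemma sgn_true u : sgn u = true -> 0 < u.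
Proof. unfold sgn. destruct (Rlt_dec 0 u); congruence. Qed.

Lemma sgn_false u : sgn u = false -> u <= 0.
Proof. unfold sgn. destruct (Rlt_dec 0 u); [congruence|lra]. Qed.

(* A midpoint query maps a width [W] to at most [W / 2 + L w], so it is the excess
   [W - 2 L w] that halves; this potential counts the halvings left, in units of [L]. *)
Definition halving_potential (L eta w W : R) : R :=
  L * Rmax 0 (lg ((W - 2 * L * w) / (4 * L * eta))).

Lemma halving_potential_nonneg L eta w W : 0 <= L -> 0 <= halving_potential L eta w W.
Proof. intros. apply Rmult_le_pos; [lra|apply Rmax_l]. Qed.

Section HalvingPotential.
Variables (L eta w : R).
Hypotheses (HL : 0 < L) (Heta : 0 < eta) (Hw : w <= eta).

Lemma halving_excess_ge_2 W : 10 * L * eta <= W -> 2 <= (W - 2 * L * w) / (4 * L * eta).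
Proof. intros. apply Rle_div_r; nra. Qed.

Lemma halving_potential_ge W : 10 * L * eta <= W -> L <= halving_potential L eta w W.
Proof.
  intros HW. pose proof (lg_ge_1 _ (halving_excess_ge_2 W HW)).
  unfold halving_potential. rewrite Rmax_right; nra.
Qed.

Lemma halving_potential_halve W W' : 10 * L * eta <= W -> W' <= W / 2 + L * w ->
  halving_potential L eta w W' + L <= halving_potential L eta w W.
Proof.
  intros HW HW'. unfold halving_potential.
  enough (Rmax 0 (lg ((W' - 2 * L * w) / (4 * L * eta))) + 1
          <= Rmax 0 (lg ((W - 2 * L * w) / (4 * L * eta)))) by nra.
  apply Rmax_lg_halve; [now apply halving_excess_ge_2|].
  replace ((W - 2 * L * w) / (4 * L * eta) / 2) with ((W / 2 + L * w - 2 * L * w) / (4 * L * eta))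
    by (field; nra).
  unfold Rdiv. apply Rmult_le_compat_r; [left; apply Rinv_0_lt_compat; nra|]. lra.
Qed.

End HalvingPotential.

Definition nonneg_range (s : cstate) : Prop := 0 <= lo s /\ 0 <= hi s.

Lemma alg3_round_nonneg_range L eta tau w s sg : 0 <= L -> 0 <= w -> nonneg_range s ->
  nonneg_range (snd (alg3_round L eta tau w s) sg).
Proof.
  intros HL Hw [Ha Hb]. unfold alg3_round, nonneg_range.
  pose proof (Rmax_l (lo s) 0). pose proof (Rmax_l (lo s) ((lo s + hi s) / 2 - L * w)).
  destruct (Rlt_dec _ _); [destruct (Rlt_dec _ _)|]; destruct sg; cbn; try lra.
  split; [lra|]. apply Rmin_glb; nra.
Qed.

Lemma run_game_nonneg_range d N L eta tau f advx advc n j : (1 <= N)%nat -> 0 <= L ->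
  nonneg_range (gcubes (run_game d N L eta tau f advx advc n) j).
Proof.
  intros HN HL. revert j.
  induction n as [|n IH]; intros j; cbn; [unfold nonneg_range; cbn; lra|].
  destruct (list_eq_dec _ _ _); auto.
  apply alg3_round_nonneg_range; auto.
  left. apply Rinv_0_lt_compat, lt_0_INR. lia.
Qed.

Lemma run_game_gncorr_le d N L eta tau f advx advc n :
  (gncorr (run_game d N L eta tau f advx advc n) <= n)%nat.
Proof. induction n as [|n IH]; cbn; [auto|]. destruct (advc _ _ _); lia. Qed.

Definition count_rate (tau M : R) : R := (M + 1) / tau.

Definition round_cost (L eta w tau M : R) : R := 10 * L * eta + L * w + count_rate tau M * L.

Definition corruption_cost (L tau M : R) : R := L * (tau + M + 1).

Section Potential.
Variables (d N : nat) (L eta tau M : R) (f : point -> R).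
Hypotheses (HN : (1 <= N)%nat) (HL : 0 < L) (Heta : 0 < eta) (Hside : / INR N <= eta)
  (Htau : 0 < tau) (Hf : admissible_f d L f)
  (HM : halving_potential L eta (/ INR N) L <= M * L).

Local Notation side := (/ INR N).
Local Notation rate := (count_rate tau M).
Local Notation cost := (round_cost L eta side tau M).
Local Notation penalty := (corruption_cost L tau M).

Lemma side_pos : 0 < side.
Proof. apply Rinv_0_lt_compat, lt_0_INR. lia. Qed.

Lemma M_nonneg : 0 <= M.
Proof. pose proof (halving_potential_nonneg L eta side L (Rlt_le _ _ HL)). nra. Qed.

Lemma rate_pos : 0 < rate.
Proof. pose proof M_nonneg. apply Rdiv_lt_0_compat; lra. Qed.

Lemma rate_mul_ge c : tau < INR (S c) -> M + 1 <= rate * INR (S c).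
Proof.
  intros Hc. pose proof M_nonneg. unfold count_rate.
  replace ((M + 1) / tau * INR (S c)) with ((M + 1) * (INR (S c) / tau)) by (field; lra).
  assert (1 <= INR (S c) / tau) by (apply Rle_div_r; lra). nra.
Qed.

Lemma rate_le_cost : rate * L <= cost.
Proof. pose proof side_pos. unfold round_cost. nra. Qed.

Lemma counter_nonneg c : 0 <= rate * L * INR c.
Proof. pose proof rate_pos. pose proof (pos_INR c). apply Rmult_le_pos; nra. Qed.

Lemma cost_nonneg : 0 <= cost.
Proof. pose proof rate_le_cost. pose proof (counter_nonneg 1). simpl INR in *. lra. Qed.

Lemma penalty_ge : L * tau + (M + 1) * L <= penalty.
Proof. unfold corruption_cost. lra. Qed.

Lemma penalty_nonneg : 0 <= penalty.
Proof. pose proof penalty_ge. pose proof M_nonneg. nra. Qed.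

Lemma f_bounds x : in_unit_cube d x -> 0 <= f x <= L.
Proof. apply Hf. Qed.

Lemma pricing_loss_le_L x q : in_unit_cube d x -> 0 <= q -> pricing_loss (f x) q <= L.
Proof. intros Hx Hq. pose proof (f_bounds x Hx). pose proof (pricing_loss_le (f x) q Hq). lra. Qed.

Definition above_range (j : list nat) (b : R) : Prop :=
  exists y, in_cube d N j y /\ b + L * side < f y.

Definition outside_range (j : list nat) (a b : R) : Prop :=
  exists y, in_cube d N j y /\ (f y < a \/ b < f y).

Lemma above_outside j a b : above_range j b -> outside_range j a b.
Proof. intros [y [Hy Hb]]. exists y. pose proof side_pos. split; [auto|right; nra]. Qed.

Lemma not_above_of_lt j x b : in_cube d N j x -> f x < b -> ~ above_range j b.
Proof.
  intros Hx Hb [y [Hy Hby]]. pose proof (in_cube_oscillation d N L f j x y HN Hf Hx Hy). lra.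
Qed.

Lemma outside_of_lt j x a b : in_cube d N j x -> f x < a -> outside_range j a b.
Proof. intros Hx Ha. exists x. auto. Qed.

Lemma pricing_loss_not_above j x a b : in_cube d N j x -> a <= f x -> ~ above_range j b ->
  pricing_loss (f x) a <= b - a + L * side.
Proof.
  intros Hx Ha Hb. rewrite pricing_loss_of_le by auto.
  destruct (Rle_dec (f x) (b + L * side)) as [Hle|Hgt]; [lra|].
  exfalso. apply Hb. exists x. split; [auto|lra].
Qed.

Definition pricing_potential (j : list nat) (s : cstate) : R :=
  indicator (above_range j (hi s)) * (L * Rmax 0 (tau - INR (cnt s)))
  + indicator (outside_range j (lo s) (hi s)) * ((M + 1) * L).

Definition searching_potential (j : list nat) (s : cstate) : R :=
  halving_potential L eta side (hi s - lo s) + indicator (outside_range j (lo s) (hi s)) * penalty.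

Definition potential (j : list nat) (s : cstate) : R :=
  rate * L * INR (cnt s) +
  if Rlt_dec (hi s - lo s) (10 * L * eta) then pricing_potential j s else searching_potential j s.

Lemma potential_narrow j a b c : b - a < 10 * L * eta ->
  potential j (mkC a b c) = rate * L * INR c + pricing_potential j (mkC a b c).
Proof. intros H. unfold potential; cbn [lo hi cnt]. now destruct (Rlt_dec _ _). Qed.

Lemma potential_wide j a b c : ~ b - a < 10 * L * eta ->
  potential j (mkC a b c) = rate * L * INR c + searching_potential j (mkC a b c).
Proof. intros H. unfold potential; cbn [lo hi cnt]. now destruct (Rlt_dec _ _). Qed.

Lemma pricing_potential_nonneg j s : 0 <= pricing_potential j s.
Proof.
  pose proof M_nonneg. pose proof (Rmax_l 0 (tau - INR (cnt s))).
  pose proof (indicator_bounds (above_range j (hi s))).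
  pose proof (indicator_bounds (outside_range j (lo s) (hi s))).
  unfold pricing_potential. apply Rplus_le_le_0_compat; apply Rmult_le_pos; nra.
Qed.

Lemma searching_potential_nonneg j s : 0 <= searching_potential j s.
Proof.
  pose proof M_nonneg. pose proof (indicator_bounds (outside_range j (lo s) (hi s))).
  pose proof (halving_potential_nonneg L eta side (hi s - lo s) (Rlt_le _ _ HL)).
  unfold searching_potential, corruption_cost. apply Rplus_le_le_0_compat; [auto|].
  apply Rmult_le_pos; nra.
Qed.

Lemma potential_ge_counter j s : rate * L * INR (cnt s) <= potential j s.
Proof.
  pose proof (pricing_potential_nonneg j s). pose proof (searching_potential_nonneg j s).
  unfold potential. destruct (Rlt_dec _ _); lra.
Qed.

Lemma potential_nonneg j s : 0 <= potential j s.
Proof. pose proof (potential_ge_counter j s). pose proof (counter_nonneg (cnt s)). lra. Qed.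

Lemma potential_reset j : potential j (mkC 0 L 0) <= M * L.
Proof.
  assert (Hin : forall y, in_cube d N j y -> 0 <= f y <= L) by (intros y Hy; apply f_bounds, Hy).
  pose proof side_pos.
  unfold potential, pricing_potential, searching_potential; cbn [lo hi cnt].
  rewrite (indicator_false (above_range j L)), (indicator_false (outside_range j 0 L)).
  - rewrite Rminus_0_r. simpl INR. pose proof M_nonneg. destruct (Rlt_dec _ _); nra.
  - intros [y [Hy Hout]]. specialize (Hin y Hy). lra.
  - intros [y [Hy Hout]]. specialize (Hin y Hy). nra.
Qed.

Lemma pricing_potential_le_penalty j s :
  pricing_potential j s <= indicator (outside_range j (lo s) (hi s)) * penalty.
Proof.
  pose proof (Rmax_l 0 (tau - INR (cnt s))). pose proof (pos_INR (cnt s)).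
  assert (Hmax : Rmax 0 (tau - INR (cnt s)) <= tau) by (apply Rmax_lub; lra).
  pose proof penalty_ge. pose proof M_nonneg.
  pose proof (indicator_bounds (outside_range j (lo s) (hi s))).
  unfold pricing_potential.
  destruct (classic (outside_range j (lo s) (hi s))) as [Hout|Hin].
  - rewrite (indicator_true _ Hout). pose proof (indicator_bounds (above_range j (hi s))).
    assert (0 <= L * Rmax 0 (tau - INR (cnt s)) <= L * tau) by (split; nra). nra.
  - rewrite (indicator_false _ Hin), (indicator_false (above_range j (hi s))).
    + lra.
    + intros Habove. apply Hin, above_outside, Habove.
Qed.

Lemma pricing_potential_counter_reset j a b c :
  pricing_potential j (mkC a b 0) <= pricing_potential j (mkC a b c) + indicator (above_range j b) * (L * tau).
Proof.
  pose proof (indicator_bounds (above_range j b)). pose proof (Rmax_l 0 (tau - INR c)).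
  assert (0 <= indicator (above_range j b) * (L * Rmax 0 (tau - INR c))) by (apply Rmult_le_pos; nra).
  unfold pricing_potential; cbn [lo hi cnt INR]. rewrite Rminus_0_r, Rmax_right by lra. lra.
Qed.

Lemma pricing_potential_counter_incr j a b c : INR (S c) <= tau ->
  pricing_potential j (mkC a b (S c)) + indicator (above_range j b) * L = pricing_potential j (mkC a b c).
Proof.
  intros Hc. rewrite S_INR in Hc. pose proof (pos_INR c).
  unfold pricing_potential; cbn [lo hi cnt]. rewrite S_INR, !Rmax_right by lra. ring.
Qed.

Lemma reset_round_step j s x q extra : in_unit_cube d x -> 0 <= q ->
  L + M * L <= potential j s + cost + extra ->
  pricing_loss (f x) q + potential j (mkC 0 L 0) <= potential j s + cost + extra.
Proof. intros Hx Hq H. pose proof (pricing_loss_le_L x q Hx Hq). pose proof (potential_reset j). lra. Qed.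

Lemma checking_round_step j x a b c cor :
  in_cube d N j x -> 0 <= b -> b - a < 10 * L * eta -> tau < INR (S c) ->
  pricing_loss (f x) b + potential j (if xorb (sgn (b - f x)) cor then mkC a b 0 else mkC 0 L 0)
  <= potential j (mkC a b c) + cost + (if cor then penalty else 0).
Proof.
  intros Hx Hb Hnarrow Hcheck.
  pose proof (pricing_loss_le_L x b (proj1 Hx) Hb). pose proof rate_le_cost. pose proof M_nonneg.
  pose proof (rate_mul_ge c Hcheck) as Hrate. rewrite S_INR in Hrate.
  assert (Hpaid : L + M * L <= rate * L * INR c + cost) by nra.
  pose proof penalty_nonneg. pose proof penalty_ge.
  destruct (xorb (sgn (b - f x)) cor) eqn:Hsg.
  - rewrite !potential_narrow by auto. simpl INR. rewrite Rmult_0_r.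
    pose proof (pricing_potential_counter_reset j a b c).
    pose proof (indicator_bounds (above_range j b)).
    pose proof (counter_nonneg c).
    destruct cor.
    + assert (0 <= L * tau) by nra.
      assert (indicator (above_range j b) * (L * tau) <= L * tau) by nra.
      nra.
    + rewrite xorb_false_r in Hsg. apply sgn_true in Hsg.
      rewrite (indicator_false _ (not_above_of_lt j x b Hx ltac:(lra))) in *. nra.
  - apply reset_round_step; [apply Hx|auto|].
    pose proof (potential_ge_counter j (mkC a b c)). cbn [cnt] in *. destruct cor; lra.
Qed.

Lemma pricing_round_step j x a b c cor :
  in_cube d N j x -> 0 <= a -> b - a < 10 * L * eta -> ~ tau < INR (S c) ->
  pricing_loss (f x) a + potential j (if xorb (sgn (a - f x)) cor then mkC 0 L 0 else mkC a b (S c))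
  <= potential j (mkC a b c) + cost + (if cor then penalty else 0).
Proof.
  intros Hx Ha Hnarrow Hprice.
  pose proof (pricing_loss_le_L x a (proj1 Hx) Ha). pose proof rate_le_cost. pose proof M_nonneg.
  pose proof penalty_nonneg. pose proof penalty_ge. pose proof side_pos.
  pose proof (pricing_potential_nonneg j (mkC a b c)).
  pose proof (counter_nonneg c). pose proof cost_nonneg.
  destruct (xorb (sgn (a - f x)) cor) eqn:Hsg.
  - apply reset_round_step; [apply Hx|auto|]. rewrite potential_narrow by auto.
    destruct cor; [nra|].
    rewrite xorb_false_r in Hsg. apply sgn_true in Hsg.
    unfold pricing_potential at 1; cbn [lo hi cnt].
    rewrite (indicator_true _ (outside_of_lt j x a b Hx ltac:(lra))).
    pose proof (indicator_bounds (above_range j b)). pose proof (Rmax_l 0 (tau - INR c)).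
    assert (0 <= indicator (above_range j b) * (L * Rmax 0 (tau - INR c))) by (apply Rmult_le_pos; nra).
    nra.
  - rewrite !potential_narrow, S_INR by auto.
    rewrite <- (pricing_potential_counter_incr j a b c) by lra.
    pose proof (indicator_bounds (above_range j b)).
    destruct cor; [nra|].
    rewrite xorb_false_r in Hsg. apply sgn_false in Hsg.
    destruct (classic (above_range j b)) as [Habove|Hnot].
    + rewrite (indicator_true _ Habove). unfold round_cost in *. nra.
    + rewrite (indicator_false _ Hnot).
      pose proof (pricing_loss_not_above j x a b Hx ltac:(lra) Hnot). unfold round_cost. nra.
Qed.

Lemma searching_round_step j x a b c s' q cor :
  in_unit_cube d x -> 0 <= q -> ~ b - a < 10 * L * eta ->
  hi s' - lo s' <= (b - a) / 2 + L * side -> cnt s' = c ->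
  (cor = false -> outside_range j (lo s') (hi s') -> outside_range j a b) ->
  pricing_loss (f x) q + potential j s' <= potential j (mkC a b c) + cost + (if cor then penalty else 0).
Proof.
  intros Hx Hq Hwide Hhalve Hc Hsound.
  assert (HW : 10 * L * eta <= b - a) by lra.
  pose proof (halving_potential_ge L eta side HL Heta Hside (b - a) HW).
  pose proof (halving_potential_halve L eta side HL Heta Hside (b - a) _ HW Hhalve).
  pose proof (pricing_loss_le_L x q Hx Hq). pose proof rate_le_cost. pose proof rate_pos. pose proof penalty_nonneg.
  pose proof (indicator_bounds (outside_range j (lo s') (hi s'))).
  pose proof (indicator_bounds (outside_range j a b)).
  assert (Hphase : (if Rlt_dec (hi s' - lo s') (10 * L * eta)
                    then pricing_potential j s' else searching_potential j s')
                   <= halving_potential L eta side (b - a) - L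
                      + indicator (outside_range j (lo s') (hi s')) * penalty).
  { destruct (Rlt_dec _ _).
    - pose proof (pricing_potential_le_penalty j s'). lra.
    - unfold searching_potential. lra. }
  assert (Hout : indicator (outside_range j (lo s') (hi s')) * penalty
                 <= indicator (outside_range j a b) * penalty + (if cor then penalty else 0)).
  { destruct cor; [nra|].
    pose proof (indicator_mono _ _ (Hsound eq_refl)). nra. }
  pose proof cost_nonneg.
  rewrite potential_wide by auto. unfold potential, searching_potential at 2; cbn [lo hi].
  rewrite Hc. lra.
Qed.

Lemma outside_after_low_feedback j x a b q : in_cube d N j x -> f x < q ->
  outside_range j (Rmax a 0) (Rmin b (q + L * side)) -> outside_range j a b.
Proof.
  intros Hx Hq [y [Hy Hout]]. exists y. split; [auto|].
  pose proof (in_cube_oscillation d N L f j x y HN Hf Hx Hy).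
  pose proof (f_bounds y (proj1 Hy)).
  pose proof (Rmax_l a 0). pose proof (Rmin_r b (q + L * side)).
  destruct Hout as [Hlo|Hhi].
  - left. unfold Rmax in Hlo. destruct (Rle_dec a 0); lra.
  - right. unfold Rmin in Hhi. destruct (Rle_dec b (q + L * side)); lra.
Qed.

Lemma outside_after_high_feedback j x a b q : in_cube d N j x -> q <= f x ->
  outside_range j (Rmax a (q - L * side)) b -> outside_range j a b.
Proof.
  intros Hx Hq [y [Hy Hout]]. exists y. split; [auto|].
  pose proof (in_cube_oscillation d N L f j y x HN Hf Hy Hx).
  destruct Hout as [Hlo|Hhi]; [left|right; auto].
  unfold Rmax in Hlo. destruct (Rle_dec a (q - L * side)); lra.
Qed.

Lemma midpoint_round_step j x a b c cor :
  in_cube d N j x -> 0 <= a -> 0 <= b -> ~ b - a < 10 * L * eta ->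
  pricing_loss (f x) ((a + b) / 2)
  + potential j (if xorb (sgn ((a + b) / 2 - f x)) cor
                 then mkC (Rmax a 0) (Rmin b ((a + b) / 2 + L * side)) c
                 else mkC (Rmax a ((a + b) / 2 - L * side)) b c)
  <= potential j (mkC a b c) + cost + (if cor then penalty else 0).
Proof.
  intros Hx Ha Hb Hwide.
  pose proof (Rmax_l a 0). pose proof (Rmin_r b ((a + b) / 2 + L * side)).
  pose proof (Rmax_r a ((a + b) / 2 - L * side)).
  destruct (xorb (sgn ((a + b) / 2 - f x)) cor) eqn:Hsg;
    apply searching_round_step; cbn [lo hi cnt]; auto; try apply Hx; try lra;
    intros ->; rewrite xorb_false_r in Hsg.
  - apply sgn_true in Hsg. apply (outside_after_low_feedback j x); auto; lra.
  - apply sgn_false in Hsg. apply (outside_after_high_feedback j x); auto; lra.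
Qed.

Lemma alg3_round_step j s x cor : in_cube d N j x -> nonneg_range s ->
  let r := alg3_round L eta tau side s in
  pricing_loss (f x) (fst r) + potential j (snd r (xorb (sgn (fst r - f x)) cor))
  <= potential j s + cost + (if cor then penalty else 0).
Proof.
  intros Hx [Ha Hb]. destruct s as [a b c]; cbn [lo hi] in *.
  unfold alg3_round; cbn [lo hi cnt].
  destruct (Rlt_dec (b - a) (10 * L * eta)) as [Hnarrow|Hwide];
    [destruct (Rlt_dec tau (INR (S c)))|]; cbn [fst snd].
  - now apply checking_round_step.
  - now apply pricing_round_step.
  - now apply midpoint_round_step.
Qed.

Definition total_potential (cubes : list nat -> cstate) : R :=
  sumR (map (fun j => potential j (cubes j)) (cube_indices d N)).

Lemma run_game_potential advx advc n : (forall h, in_unit_cube d (advx h)) ->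
  let g := run_game d N L eta tau f advx advc n in
  gloss g + total_potential (gcubes g)
  <= total_potential (fun _ => mkC 0 L 0) + INR n * cost + INR (gncorr g) * penalty.
Proof.
  intros Hadv. induction n as [|n IH]; cbn -[INR total_potential]; [simpl; lra|].
  set (g := run_game d N L eta tau f advx advc n) in *.
  set (x := advx (ghist g)). set (j := cube_index d N x).
  set (r := alg3_round L eta tau side (gcubes g j)).
  set (cor := advc (ghist g) x (fst r)).
  assert (Hx : in_cube d N j x) by (split; [apply Hadv|reflexivity]).
  pose proof (alg3_round_step j (gcubes g j) x cor Hx
                (run_game_nonneg_range d N L eta tau f advx advc n j HN (Rlt_le _ _ HL))) as Hstep.
  fold r in Hstep.
  unfold total_potential at 1.
  rewrite (sumR_map_update (fun j' => potential j' (gcubes g j')) _ j).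
  - fold (total_potential (gcubes g)).
    destruct (list_eq_dec Nat.eq_dec j j) as [_|]; [|contradiction].
    rewrite plus_INR, S_INR. destruct cor; simpl INR; lra.
  - apply cube_indices_NoDup.
  - apply in_cube_indices. intros. now apply cell_lt.
  - intros i Hi. now destruct (list_eq_dec Nat.eq_dec i j).
Qed.

Theorem run_game_loss_bound advx advc n : (forall h, in_unit_cube d (advx h)) ->
  let g := run_game d N L eta tau f advx advc n in
  gloss g <= INR (N ^ d) * (M * L) + INR n * cost + INR (gncorr g) * penalty.
Proof.
  intros Hadv g. pose proof (run_game_potential advx advc n Hadv) as Hg.
  assert (0 <= total_potential (gcubes g))
    by (apply sumR_map_nonneg; intros; apply potential_nonneg).
  assert (total_potential (fun _ => mkC 0 L 0) <= INR (N ^ d) * (M * L)).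
  { unfold total_potential. rewrite <- length_cube_indices.
    apply sumR_map_le_const. intros. apply potential_reset. }
  cbv zeta in Hg. fold g in Hg. lra.
Qed.

End Potential.

Lemma eta0_of_pos d T : 0 < eta0_of d T.
Proof. apply exp_pos. Qed.

Lemma inv_eta0_of d T : / eta0_of d T = Rpower (INR T) (/ INR (d + 1)).
Proof. unfold eta0_of. now rewrite Rpower_Ropp, Rinv_inv. Qed.

Lemma inv_eta0_of_bounds d T : 1 <= INR T -> 1 <= / eta0_of d T <= INR T.
Proof.
  intros HT. rewrite inv_eta0_of.
  assert (Hd : 1 <= INR (d + 1)) by (apply (le_INR 1); lia).
  split.
  - rewrite <- (Rpower_O (INR T)) by lra. apply Rle_Rpower; auto.
    left. apply Rinv_0_lt_compat. lra.
  - apply Rle_trans with (Rpower (INR T) 1); [|rewrite Rpower_1; lra].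
    apply Rle_Rpower; auto. rewrite <- Rinv_1. apply Rinv_le_contravar; lra.
Qed.

Lemma mul_eta0_of d T : 0 < INR T ->
  INR T * eta0_of d T = Rpower (INR T) (INR d / INR (d + 1)).
Proof.
  intros HT. unfold eta0_of. rewrite <- (Rpower_1 (INR T)) at 1 by lra.
  rewrite <- Rpower_plus, plus_INR. f_equal. simpl INR. field.
  pose proof (pos_INR d). lra.
Qed.

Lemma inv_eta0_of_pow d T : 0 < INR T ->
  (/ eta0_of d T) ^ d = Rpower (INR T) (INR d / INR (d + 1)).
Proof.
  intros HT. rewrite inv_eta0_of, <- Rpower_pow by apply exp_pos.
  rewrite Rpower_mult. f_equal. unfold Rdiv. ring.
Qed.

Lemma INR_N_of eta : 0 < eta -> INR (N_of eta) = IZR (up (/ eta)).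
Proof.
  intros Heta. destruct (archimed (/ eta)) as [Hup _].
  pose proof (Rinv_0_lt_compat eta Heta).
  unfold N_of. rewrite INR_IZR_INZ, Z2Nat.id; [reflexivity|].
  apply le_IZR. lra.
Qed.

Lemma N_of_ge_1 eta : 0 < eta -> (1 <= N_of eta)%nat.
Proof.
  intros Heta. apply INR_le. rewrite INR_N_of by auto. simpl INR.
  destruct (archimed (/ eta)) as [Hup _]. pose proof (Rinv_0_lt_compat eta Heta).
  assert (Hpos : (0 < up (/ eta))%Z) by (apply lt_IZR; lra).
  apply IZR_le. lia.
Qed.

Lemma inv_N_of_le eta : 0 < eta -> / INR (N_of eta) <= eta.
Proof.
  intros Heta. rewrite INR_N_of by auto.
  destruct (archimed (/ eta)) as [Hup _]. pose proof (Rinv_0_lt_compat eta Heta).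
  rewrite <- (Rinv_inv eta) at 2. apply Rinv_le_contravar; lra.
Qed.

Lemma N_of_le eta : 0 < eta <= 1 -> INR (N_of eta) <= 2 / eta.
Proof.
  intros Heta. rewrite INR_N_of by lra.
  destruct (archimed (/ eta)) as [_ Hup].
  assert (1 <= / eta) by (rewrite <- Rinv_1; apply Rinv_le_contravar; lra).
  unfold Rdiv. lra.
Qed.

Lemma tau0_of_pos T C : (1 <= T)%nat -> (1 <= C)%nat -> 0 < tau0_of T C.
Proof.
  intros HT HC. apply sqrt_lt_R0, Rdiv_lt_0_compat; apply lt_0_INR; lia.
Qed.

Lemma tau0_of_mul_sqrt T C : (1 <= C)%nat ->
  tau0_of T C * sqrt (INR T * INR C) = INR T.
Proof.
  intros HC. apply (lt_0_INR C) in HC. pose proof (pos_INR T).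
  unfold tau0_of. rewrite <- sqrt_mult_alt by (apply Rdiv_le_0_compat; lra).
  replace (INR T / INR C * (INR T * INR C)) with (INR T * INR T) by (field; lra).
  now apply sqrt_square.
Qed.

Lemma corruptions_mul_tau0_of T C : (1 <= C)%nat ->
  INR C * tau0_of T C = sqrt (INR T * INR C).
Proof.
  intros HC. apply (lt_0_INR C) in HC. pose proof (pos_INR T).
  unfold tau0_of. rewrite <- (sqrt_square (INR C)) at 1 by lra.
  rewrite <- sqrt_mult_alt by nra. f_equal. field. lra.
Qed.

Section TunedParameters.
Variables (d T C : nat) (L : R).
Hypotheses (HT : (2 <= T)%nat) (HC : (1 <= C)%nat) (HL : 0 < L).

Local Notation eta := (eta0_of d T).
Local Notation N := (N_of (eta0_of d T)).
Local Notation tau := (tau0_of T C).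
Local Notation M := (lg (INR T)).
Local Notation A := (Rpower (INR T) (INR d / INR (d + 1))).
Local Notation Q := (sqrt (INR T * INR C)).

Lemma horizon_ge_2 : 2 <= INR T.
Proof. apply (le_INR 2) in HT. exact HT. Qed.

Lemma eta0_of_bounds : 0 < eta <= 1.
Proof.
  pose proof horizon_ge_2. pose proof (eta0_of_pos d T).
  destruct (inv_eta0_of_bounds d T ltac:(lra)).
  split; [auto|]. rewrite <- (Rinv_inv eta), <- Rinv_1. apply Rinv_le_contravar; lra.
Qed.

Lemma lg_horizon_bounds : 0 <= M <= 2 * ln (INR T) /\ 1 <= 2 * ln (INR T).
Proof.
  pose proof horizon_ge_2. pose proof ln_2_pos. pose proof ln_lt_2.
  assert (ln 2 <= ln (INR T)) by (apply ln_le; lra).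
  unfold lg. repeat split; [apply Rdiv_le_0_compat; lra|apply Rle_div_l; nra|lra].
Qed.

Lemma tuned_halving_bound : halving_potential L eta (/ INR N) L <= M * L.
Proof.
  pose proof horizon_ge_2. pose proof eta0_of_bounds. pose proof lg_horizon_bounds.
  destruct (inv_eta0_of_bounds d T ltac:(lra)).
  assert (0 < / INR N) by (apply Rinv_0_lt_compat, lt_0_INR, N_of_ge_1; lra).
  unfold halving_potential. rewrite Rmult_comm. apply Rmult_le_compat_r; [lra|].
  apply Rmax_lub; [lra|]. unfold lg. apply Rmult_le_compat_r.
  { left. apply Rinv_0_lt_compat, ln_2_pos. }
  apply ln_le_of_le; [|lra]. apply Rle_div_l; [nra|].
  assert (/ eta * eta = 1) by (field; lra).
  assert (1 <= INR T * eta) by nra. nra.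
Qed.

Lemma cube_count_le : INR (N ^ d) <= 2 ^ d * A.
Proof.
  pose proof eta0_of_bounds.
  rewrite pow_INR, <- inv_eta0_of_pow, <- Rpow_mult_distr by (pose proof horizon_ge_2; lra).
  apply pow_incr. split; [apply pos_INR|]. now apply N_of_le.
Qed.

Lemma horizon_cost_le : INR T * round_cost L eta (/ INR N) tau M <= L * (11 * A + (M + 1) * Q).
Proof.
  pose proof horizon_ge_2. pose proof eta0_of_bounds. pose proof lg_horizon_bounds.
  pose proof (inv_N_of_le eta ltac:(lra)).
  pose proof (tau0_of_pos T C ltac:(lia) HC) as Htau.
  assert (Hq : INR T / tau = Q).
  { apply Rmult_eq_reg_l with tau; [|lra].
    rewrite (tau0_of_mul_sqrt T C HC). field. lra. }
  rewrite <- (mul_eta0_of d T), <- Hq by lra.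
  unfold round_cost, count_rate.
  replace (INR T * (10 * L * eta + L * / INR N + (M + 1) / tau * L))
    with (L * (10 * (INR T * eta) + INR T * / INR N + (M + 1) * (INR T / tau)))
    by (unfold Rdiv; ring).
  apply Rmult_le_compat_l; [lra|]. nra.
Qed.

Lemma corruption_total_le nc : (nc <= C)%nat -> (nc <= T)%nat ->
  INR nc * corruption_cost L tau M <= L * ((M + 2) * Q).
Proof.
  intros HnC HnT. apply le_INR in HnC, HnT.
  pose proof (pos_INR nc). pose proof lg_horizon_bounds.
  pose proof (tau0_of_pos T C ltac:(lia) HC). pose proof (corruptions_mul_tau0_of T C HC).
  assert (Hnc : INR nc <= Q).
  { rewrite <- (sqrt_square (INR nc)) by lra. apply sqrt_le_1_alt, Rmult_le_compat; lra. }
  assert (INR nc * tau <= Q) by (rewrite <- (corruptions_mul_tau0_of T C HC); nra).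
  assert (INR nc * (M + 1) <= Q * (M + 1)) by nra.
  unfold corruption_cost. nra.
Qed.

Lemma tuned_cost_le nc : (nc <= C)%nat -> (nc <= T)%nat ->
  INR (N ^ d) * (M * L) + INR T * round_cost L eta (/ INR N) tau M
  + INR nc * corruption_cost L tau M
  <= (2 * 2 ^ d + 22) * L * ln (INR T) ^ 1 * (A + Q).
Proof.
  intros HnC HnT.
  pose proof cube_count_le. pose proof horizon_cost_le. pose proof (corruption_total_le nc HnC HnT).
  destruct lg_horizon_bounds as [[HM0 HM] Hln].
  assert (0 <= A) by (left; apply exp_pos). assert (0 <= Q) by apply sqrt_pos.
  assert (0 <= 2 ^ d) by (apply pow_le; lra).
  assert (INR (N ^ d) * (M * L) <= L * (2 ^ d * A * M)).
  { replace (L * (2 ^ d * A * M)) with (2 ^ d * A * (M * L)) by ring.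
    apply Rmult_le_compat_r; nra. }
  assert (2 ^ d * A * M <= 2 ^ d * A * (2 * ln (INR T))) by (apply Rmult_le_compat_l; nra).
  assert (11 * A <= 11 * A * (2 * ln (INR T))) by nra.
  assert (0 <= 2 ^ d * ln (INR T)) by nra.
  assert ((2 * M + 3) * Q <= (2 * 2 ^ d + 22) * ln (INR T) * Q) by (apply Rmult_le_compat_r; lra).
  assert (2 ^ d * A * M + 11 * A + (2 * M + 3) * Q <= (2 * 2 ^ d + 22) * ln (INR T) * (A + Q)) by nra.
  rewrite pow_1. nra.
Qed.

End TunedParameters.

Theorem corollary15 :
  forall d : nat, (1 <= d)%nat ->
  exists (K : R) (k : nat),
  forall (L : R) (T C : nat),
    0 < L -> (2 <= T)%nat -> (1 <= C)%nat ->
    forall (f : point -> R), admissible_f d L f ->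
    forall (advx : history -> point) (advc : history -> point -> R -> bool),
      (forall h, in_unit_cube d (advx h)) ->
      let g := run_game d (N_of (eta0_of d T)) L (eta0_of d T) (tau0_of T C)
                 f advx advc T in
      (gncorr g <= C)%nat ->
      gloss g <= K * L * (ln (INR T)) ^ k *
                 (Rpower (INR T) (INR d / INR (d + 1)) + sqrt (INR T * INR C)).
Proof.
  intros d _. exists (2 * 2 ^ d + 22), 1%nat.
  intros L T C HL HT HC f Hf advx advc Hadv g Hcorr.
  destruct (eta0_of_bounds d T HT) as [Heta _].
  eapply Rle_trans.
  - apply (run_game_loss_bound d _ L _ _ (lg (INR T)) f); auto.
    + now apply N_of_ge_1.
    + now apply inv_N_of_le.
    + apply tau0_of_pos; lia.
    + now apply tuned_halving_bound.
  - apply tuned_cost_le; auto. apply run_game_gncorr_le.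
Qed.
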